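(* For integers $n\ge2$ let $P_n$ denote the Legendre polynomials and define $$\tilde P_n(z)=\frac1{n+2}\Big(nP_n(z)-\frac2{n-1}P_{n-1}'(z)\Big).$$ Then $\tilde P_n=\partial_z G_n$ where $G_n$ solves $\big((1-z^2)G_{n,z}\big)_{,z}=(z^2-1)P_n'(z)$, and the polynomials $\tilde P_n$ are orthogonal on $[-1,1]$: $$\int_{-1}^1\tilde P_k(z)\tilde P_n(z)\,dz=\frac{2n(n+1)}{(n-1)(n+2)(2n+1)}\,\delta_{kn},\qquad k,n\ge2 .$$ *)

From HB Require Import structures.
From mathcomp Require Import all_boot all_order all_algebra.
Set Implicit Arguments. Unset Strict Implicit. Unset Printing Implicit Defensive.
Import Order.TTheory GRing.Theory Num.Theory.
Local Open Scope ring_scope.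

Definition legendre (R : fieldType) (n : nat) : {poly R} :=
  ((2 ^ n * n`!)%N%:R)^-1 *: (('X^2 - 1) ^+ n)^`(n).

Definition legendre_tilde (R : fieldType) (n : nat) : {poly R} :=
  (n.+2%:R)^-1 *: (n%:R *: legendre R n
                   - (2 / (n.-1)%:R) *: (legendre R n.-1)^`()).

(* Formal antiderivative of a polynomial (vanishing at 0):
   sum_j p_j X^(j+1)/(j+1). *)
Definition poly_prim (R : fieldType) (p : {poly R}) : {poly R} :=
  \poly_(i < (size p).+1) (if i is j.+1 then p`_j / j.+1%:R else 0).

Definition poly_integral (R : fieldType) (a b : R) (p : {poly R}) : R :=
  (poly_prim p).[b] - (poly_prim p).[a].

From HB Require Import structures.
From mathcomp Require Import all_boot all_order all_algebra.
From mathcomp Require Import ring lra zify.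
Import Order.TTheory GRing.Theory Num.Theory.
Local Open Scope ring_scope.

(* Rodrigues' formula gives the derivative recurrences
   P_(m+1)' - X P_m' = (m+1) P_m  and  X P_(m+1)' - P_m' = (m+1) P_(m+1),
   hence Legendre's equation ((X^2-1) P_n')' = n(n+1) P_n and the values P_n(+-1).
   Since X^2-1 vanishes at +-1, the Legendre operator is symmetric for the
   integral over [-1, 1], which gives orthogonality; the recurrences also give
   the norms 2/(2n+1).  They further yield (n-1)(n+2) P~_n = (X^2-1) P_n'', and
   differentiating Legendre's equation once gives
   ((X^2-1)^2 P_n'')' = (n-1)(n+2) (X^2-1) P_n'.  Hence -P~_n is G' for a
   solution G, unique since ((X^2-1) p)' = 0 forces p = 0, and two integrations
   by parts reduce the integral of P~_k P~_n to a multiple of that of P_k P_n. *)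

Section PolyIntegral.
Variable R : numFieldType.
Implicit Types (a b c : R) (p q F : {poly R}).

Lemma deriv_poly_prim p : (poly_prim p)^`() = p.
Proof.
apply/polyP=> i; rewrite coef_deriv coef_poly ltnS.
case: ifP => Hi.
- by rewrite -[_ *+ _]mulr_natr divfK // pnatr_eq0.
- by rewrite mul0rn nth_default // leqNgt Hi.
Qed.

Lemma deriv_eq0 q : q^`() = 0 -> q = (q`_0)%:P.
Proof.
move=> q'0; apply/polyP=> [[|i]]; rewrite coefC //=.
have /eqP := congr1 (fun r : {poly R} => r`_i) q'0.
by rewrite coef_deriv coef0 mulrn_eq0 /= => /eqP.
Qed.

Lemma poly_integralE a b p F : F^`() = p -> poly_integral a b p = F.[b] - F.[a].
Proof.
move=> F'p; rewrite /poly_integral.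
have := deriv_eq0 (poly_prim p - F).
rewrite derivB deriv_poly_prim F'p subrr => /(_ erefl) primE.
have -> : poly_prim p = F + ((poly_prim p - F)`_0)%:P by rewrite -primE addrC subrK.
rewrite !hornerE; ring.
Qed.

Lemma poly_integralD a b p q :
  poly_integral a b (p + q) = poly_integral a b p + poly_integral a b q.
Proof.
rewrite (@poly_integralE a b _ (poly_prim p + poly_prim q)).
  by rewrite /poly_integral !hornerD; ring.
by rewrite derivD !deriv_poly_prim.
Qed.

Lemma poly_integralZ a b c p : poly_integral a b (c *: p) = c * poly_integral a b p.
Proof.
rewrite (@poly_integralE a b _ (c *: poly_prim p)).
  by rewrite /poly_integral !hornerZ; ring.
by rewrite derivZ deriv_poly_prim.
Qed.

Lemma poly_integral_natl a b k p :
  poly_integral a b (k%:R * p) = k%:R * poly_integral a b p.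
Proof. by rewrite mulr_natl -scaler_nat poly_integralZ. Qed.

Lemma poly_integralB a b p q :
  poly_integral a b (p - q) = poly_integral a b p - poly_integral a b q.
Proof. by rewrite poly_integralD -scaleN1r poly_integralZ mulN1r. Qed.

Lemma poly_integral1 a b : poly_integral a b 1 = b - a.
Proof. by rewrite (@poly_integralE _ _ _ 'X) ?derivX // !hornerX. Qed.

Lemma poly_integral_by_parts a b p q : poly_integral a b (p^`() * q)
  = (p * q).[b] - (p * q).[a] - poly_integral a b (p * q^`()).
Proof.
rewrite (@poly_integralE a b _ (p * q - poly_prim (p * q^`()))).
  by rewrite /poly_integral !hornerE; ring.
by rewrite derivB derivM deriv_poly_prim addrK.
Qed.

End PolyIntegral.

(* A substitute for a [linear_combination] tactic: [x = y] follows once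
   [x - y] is exhibited, by [ring], as a combination of the hypotheses. *)
Section LinearCombination.
Context {S : comPzRingType}.

Lemma eq_lincomb1 {x y a1 b1 : S} (k1 : S) :
  a1 = b1 -> x - y = k1 * (a1 - b1) -> x = y.
Proof. by move=> ->; rewrite subrr mulr0 => /eqP; rewrite subr_eq0 => /eqP. Qed.

Lemma eq_lincomb2 {x y a1 b1 a2 b2 : S} (k1 k2 : S) :
  a1 = b1 -> a2 = b2 -> x - y = k1 * (a1 - b1) + k2 * (a2 - b2) -> x = y.
Proof. by move=> -> e2; rewrite subrr mulr0 add0r; apply: (eq_lincomb1 k2). Qed.

Lemma eq_lincomb3 {x y a1 b1 a2 b2 a3 b3 : S} (k1 k2 k3 : S) :
  a1 = b1 -> a2 = b2 -> a3 = b3 ->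
  x - y = k1 * (a1 - b1) + k2 * (a2 - b2) + k3 * (a3 - b3) -> x = y.
Proof. by move=> -> e2 e3; rewrite subrr mulr0 add0r; apply: (eq_lincomb2 k2 k3). Qed.

End LinearCombination.

Section LegendreRecurrences.
Variable R : numFieldType.
Implicit Types p f : {poly R}.
Local Notation P := (legendre R).
Local Notation W n := (('X^2 - 1 : {poly R}) ^+ n).

Lemma deriv_natl k p : (k%:R * p)^`() = k%:R * p^`().
Proof. by rewrite !mulr_natl derivMn. Qed.

Lemma deriv_X2subr1 : ('X^2 - 1 : {poly R})^`() = 2%:R * 'X.
Proof. by rewrite derivB derivXn derivC subr0 expr1 mulr_natl. Qed.

Lemma derivnS_mulX k p : ('X * p)^`(k.+1) = 'X * p^`(k.+1) + k.+1%:R * p^`(k).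
Proof.
elim: k => [|k IH]; first by rewrite derivn1 derivn0 derivM derivX; ring.
by rewrite derivnS IH derivD derivM deriv_natl derivX -!derivnS; ring.
Qed.

Lemma deriv_rodrigues n : (W n.+1)^`() = (2 * n.+1)%:R * ('X * W n).
Proof. by rewrite deriv_exp deriv_X2subr1 /= natrM; ring. Qed.

Lemma rodrigues_ode n : ('X^2 - 1) * (W n)^`() = (2 * n)%:R * ('X * W n).
Proof.
case: n => [|n]; first by rewrite expr0 derivC mulr0 muln0 mul0r.
by rewrite deriv_rodrigues [in RHS]exprS !natrM; ring.
Qed.

(* The (m+1)-st derivative of the equation satisfied by f = (X^2 - 1)^n. *)
Lemma derivn_rodrigues_ode {f n} :
  ('X^2 - 1) * f^`() = (2 * n)%:R * ('X * f) -> forall m,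
  ('X^2 - 1) * f^`(m.+2) + (2 * m.+1)%:R * ('X * f^`(m.+1))
    + (m.+1 * m)%:R * f^`(m)
  = (2 * n)%:R * ('X * f^`(m.+1)) + (2 * n * m.+1)%:R * f^`(m).
Proof.
move=> ode m; elim: m => [|m IH].
  have := congr1 deriv ode; rewrite deriv_natl !derivM deriv_X2subr1 derivX.
  rewrite derivn0 derivn1 derivnS derivn1 !natrM => e.
  by apply: (eq_lincomb1 1 e); ring.
have := congr1 deriv IH.
rewrite !derivD !deriv_natl !derivM deriv_X2subr1 derivX -!derivnS !natrM => e.
by apply: (eq_lincomb1 1 e); ring.
Qed.

Definition rodrigues_coef m : R := ((2 ^ m * m`!)%N%:R)^-1.

Lemma rodrigues_coefS m : rodrigues_coef m.+1 * (2 * m.+1)%:R = rodrigues_coef m.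
Proof.
rewrite /rodrigues_coef.
have -> : (2 ^ m.+1 * m.+1`!)%N = ((2 * m.+1) * (2 ^ m * m`!))%N.
  by rewrite expnS factS; ring.
by rewrite natrM invfM mulrAC mulVf ?mul1r // pnatr_eq0.
Qed.

Lemma legendreE m : P m = rodrigues_coef m *: (W m)^`(m).
Proof. by []. Qed.

Lemma legendre0 : P 0 = 1.
Proof. by rewrite legendreE expr0 derivn0 /rodrigues_coef /= mul1n invr1 scale1r. Qed.

Lemma legendreS m : P m.+1 = rodrigues_coef m *: ('X * W m)^`(m).
Proof.
rewrite legendreE derivSn deriv_rodrigues mulr_natl derivnMn -scaler_nat.
by rewrite scalerA rodrigues_coefS.
Qed.

Lemma deriv_legendre m : (P m)^`() = rodrigues_coef m *: (W m)^`(m.+1).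
Proof. by rewrite legendreE derivZ derivnS. Qed.

Lemma deriv_legendreSE m : (P m.+1)^`() =
  rodrigues_coef m *: ('X * (W m)^`(m.+1) + m.+1%:R * (W m)^`(m)).
Proof. by rewrite legendreS derivZ -derivnS derivnS_mulX. Qed.

Lemma deriv_legendreS m : (P m.+1)^`() - 'X * (P m)^`() = m.+1%:R * P m.
Proof. by rewrite deriv_legendreSE deriv_legendre legendreE -!mul_polyC; ring. Qed.

Lemma X_deriv_legendreS m : 'X * (P m.+1)^`() - (P m)^`() = m.+1%:R * P m.+1.
Proof.
case: m => [|m].
  rewrite deriv_legendreSE deriv_legendre legendreS expr0 !derivn0 derivn1.
  by rewrite -polyC1 derivC -!mul_polyC; ring.
rewrite deriv_legendreSE deriv_legendre legendreS derivnS_mulX.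
have := derivn_rodrigues_ode (rodrigues_ode m.+1) m; rewrite !natrM => e.
by apply: (eq_lincomb1 (rodrigues_coef m.+1)%:P e); rewrite -!mul_polyC; ring.
Qed.

End LegendreRecurrences.

Section LegendreOrthogonality.
Variable R : numFieldType.
Implicit Types p q : {poly R}.
Local Notation P := (legendre R).
Local Notation I := (poly_integral (-1) 1).

Lemma X2subr1_deriv_legendre n :
  ('X^2 - 1) * (P n)^`() = n.+1%:R * (P n.+1 - 'X * P n).
Proof.
apply: (eq_lincomb2 1 (- 'X) (X_deriv_legendreS R n) (deriv_legendreS R n)); ring.
Qed.

Lemma legendre_ode n : (('X^2 - 1) * (P n)^`())^`() = (n * n.+1)%:R * P n.
Proof.
rewrite X2subr1_deriv_legendre deriv_natl derivB derivM derivX.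
by apply: (eq_lincomb1 n.+1%:R (deriv_legendreS R n)); rewrite natrM; ring.
Qed.

Lemma horner_natr k (x : R) : (k%:R : {poly R}).[x] = k%:R.
Proof. by rewrite -polyC_natr hornerC. Qed.

Lemma horner_legendre1 n : (P n).[1] = 1.
Proof.
elim: n => [|n IH]; first by rewrite legendre0 hornerC.
have e1 := congr1 (horner^~ 1) (X_deriv_legendreS R n).
have e2 := congr1 (horner^~ 1) (deriv_legendreS R n).
rewrite !(hornerD, hornerN, hornerM, hornerX, horner_natr, IH) in e1 e2.
apply: (mulfI (x := n.+1%:R)); first by rewrite pnatr_eq0.
by apply: (eq_lincomb2 (-1) 1 e1 e2); ring.
Qed.

Lemma horner_legendreN1 n : (P n).[-1] = (-1) ^+ n.
Proof.
elim: n => [|n IH]; first by rewrite legendre0 hornerC expr0.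
have e1 := congr1 (horner^~ (-1)) (X_deriv_legendreS R n).
have e2 := congr1 (horner^~ (-1)) (deriv_legendreS R n).
rewrite !(hornerD, hornerN, hornerM, hornerX, horner_natr, IH) in e1 e2.
apply: (mulfI (x := n.+1%:R)); first by rewrite pnatr_eq0.
by rewrite exprS; apply: (eq_lincomb2 (-1) (-1) e1 e2); ring.
Qed.

(* No boundary terms: the weight X^2 - 1 vanishes at both ends. *)
Lemma poly_integral_by_parts_X2subr1 p q :
  I (p^`() * (('X^2 - 1) * q)) = - I (p * (('X^2 - 1) * q)^`()).
Proof.
by rewrite poly_integral_by_parts !hornerM !(hornerD, hornerN, hornerXn, hornerC); ring.
Qed.

Lemma poly_integral_legendre_ode p n :
  (n * n.+1)%:R * I (p * P n) = - I (p^`() * (('X^2 - 1) * (P n)^`())).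
Proof.
rewrite poly_integral_by_parts_X2subr1 opprK legendre_ode -poly_integral_natl.
by congr I; ring.
Qed.

Lemma legendre_orthogonal k n : k != n -> I (P k * P n) = 0.
Proof.
move=> neq_kn.
have ekn := poly_integral_legendre_ode (P k) n.
have enk := poly_integral_legendre_ode (P n) k.
have sym : (P n)^`() * (('X^2 - 1) * (P k)^`()) = (P k)^`() * (('X^2 - 1) * (P n)^`()).
  by ring.
rewrite [P n * P k]mulrC sym in enk.
have : ((n * n.+1)%:R - (k * k.+1)%:R) * I (P k * P n) = 0.
  by rewrite mulrBl ekn enk subrr.
move/eqP; rewrite mulf_eq0 subr_eq0 eqr_nat => /orP [/eqP eq_nk|/eqP //].
have eq_kn : k = n by nia.
by rewrite eq_kn eqxx in neq_kn.
Qed.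

Lemma poly_integral_X_mul_deriv_sqr p :
  2 * I ('X * p * p^`()) = p.[1] ^+ 2 + p.[-1] ^+ 2 - I (p * p).
Proof.
have := poly_integral_by_parts R (-1) 1 p ('X * p).
rewrite derivM derivX mul1r mulrDr poly_integralD !hornerM !hornerX.
have -> : p^`() * ('X * p) = 'X * p * p^`() by ring.
have -> : p * ('X * p^`()) = 'X * p * p^`() by ring.
by move=> e; apply: (eq_lincomb1 1 e); ring.
Qed.

Lemma poly_integral_X_mul_deriv_legendre n :
  2 * I ('X * P n * (P n)^`()) = 2 - I (P n * P n).
Proof.
rewrite poly_integral_X_mul_deriv_sqr horner_legendre1 horner_legendreN1.
by rewrite sqrr_sign expr1n.
Qed.

Lemma poly_integral_legendreS_mul_deriv n :
  I (P n.+1 * (P n)^`()) = 2 - I (P n * (P n.+1)^`()).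
Proof.
rewrite mulrC poly_integral_by_parts !hornerM !horner_legendre1 !horner_legendreN1.
by rewrite mulr1 exprS mulrCA -expr2 sqrr_sign; ring.
Qed.

Lemma legendre_norm_derivS n :
  (2 * n + 1)%:R * I (P n * P n) = 2 * I (P n * (P n.+1)^`()) - 2.
Proof.
have e : I (P n * (P n.+1)^`()) - I ('X * P n * (P n)^`()) = n.+1%:R * I (P n * P n).
  rewrite -poly_integralB -poly_integral_natl; congr I.
  by apply: (eq_lincomb1 (P n) (deriv_legendreS R n)); ring.
apply: (eq_lincomb2 (-2) (-1) e (poly_integral_X_mul_deriv_legendre n)).
by rewrite natrD natrM; ring.
Qed.

Lemma legendreS_norm_derivS n :
  (2 * n.+1 + 1)%:R * I (P n.+1 * P n.+1) = 2 * I (P n * (P n.+1)^`()) - 2.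
Proof.
have e : I ('X * P n.+1 * (P n.+1)^`()) - I (P n.+1 * (P n)^`())
         = n.+1%:R * I (P n.+1 * P n.+1).
  rewrite -poly_integralB -poly_integral_natl; congr I.
  by apply: (eq_lincomb1 (P n.+1) (X_deriv_legendreS R n)); ring.
apply: (eq_lincomb3 (-2) 1 (-2) e (poly_integral_X_mul_deriv_legendre n.+1)
  (poly_integral_legendreS_mul_deriv n)).
by rewrite natrD natrM; ring.
Qed.

Lemma legendre_norm n : I (P n * P n) = 2 / (2 * n + 1)%:R.
Proof.
suff <- : (2 * n + 1)%:R * I (P n * P n) = 2.
  by rewrite [RHS]mulrC mulKf // pnatr_eq0 addn1.
elim: n => [|n IH]; first by rewrite legendre0 mulr1 poly_integral1 mul1r opprK.
by rewrite legendreS_norm_derivS -legendre_norm_derivS.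
Qed.

End LegendreOrthogonality.

Section LegendreTilde.
Variable R : numFieldType.
Implicit Types p : {poly R}.
Local Notation P := (legendre R).
Local Notation Pt := (legendre_tilde R).
Local Notation I := (poly_integral (-1) 1).
Local Notation D2 n := (('X^2 - 1) * (P n)^`()^`()).

Lemma deriv_X2subr1_mul_eq0 p : (('X^2 - 1) * p)^`() = 0 -> p = 0.
Proof.
move=> /deriv_eq0 wp_const.
have wp0 : ('X^2 - 1) * p = 0.
  rewrite wp_const; congr polyC.
  have := congr1 (horner^~ 1) wp_const.
  by rewrite /= hornerC hornerM !hornerE expr1n subrr mul0r.
apply/eqP; move/eqP: wp0; rewrite mulf_eq0 => /orP [|//].
move/eqP/(congr1 (horner^~ 0)); rewrite !hornerE expr0n /= sub0r => /eqP.
by rewrite oppr_eq0 oner_eq0.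
Qed.

Lemma X2subr1_deriv2_legendre n :
  D2 n = (n * n.+1)%:R * P n - 2%:R * ('X * (P n)^`()).
Proof.
have := legendre_ode R n; rewrite derivM deriv_X2subr1 => e.
by apply: (eq_lincomb1 1 e); ring.
Qed.

(* Legendre's equation differentiated once; for the index n+1 the
   eigenvalue becomes (n+1)(n+2) - 2 = n(n+3). *)
Lemma legendre_deriv_ode n :
  (('X^2 - 1) * D2 n.+1)^`() = (n * n.+3)%:R * (('X^2 - 1) * (P n.+1)^`()).
Proof.
have e := X2subr1_deriv2_legendre n.+1.
rewrite [in LHS]X2subr1_deriv2_legendre derivM deriv_X2subr1 derivB !deriv_natl derivM derivX.
by apply: (eq_lincomb1 (- 2%:R * 'X) e); rewrite !natrM; ring.
Qed.

Lemma legendre_tildeE n : Pt n.+2 = ((n.+1 * n.+4)%:R)^-1 *: D2 n.+2.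
Proof.
have k_neq0 : (n.+1 * n.+4)%:R != 0 :> R by rewrite pnatr_eq0.
move: (X_deriv_legendreS R n.+1) (X2subr1_deriv2_legendre n.+2).
rewrite /legendre_tilde /=; move: (P n.+2) (P n.+1) => L2 L1 eL1 eL2.
apply: (scalerI k_neq0); rewrite [RHS]scalerA mulfV // scale1r.
rewrite scalerA natrM mulfK ?pnatr_eq0 // scalerBr !scalerA.
rewrite mulrCA mulfV ?pnatr_eq0 // mulr1 -!mul_polyC.
apply: (eq_lincomb2 2%:R (-1) eL1 eL2).
by rewrite !polyCM !polyC_natr !natrM; ring.
Qed.

Lemma X2subr1_legendre_tilde_deriv n :
  (('X^2 - 1) * Pt n.+2)^`() = ('X^2 - 1) * (P n.+2)^`().
Proof.
rewrite legendre_tildeE -scalerAr derivZ legendre_deriv_ode mulr_natl -scaler_nat.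
by rewrite scalerA mulVf ?scale1r // pnatr_eq0.
Qed.

Lemma poly_integral_deriv2_legendre k n :
  I (D2 k * D2 n.+1) = (n * n.+3 * (n.+1 * n.+2))%:R * I (P k * P n.+1).
Proof.
have -> : D2 k * D2 n.+1 = (P k)^`()^`() * (('X^2 - 1) * D2 n.+1) by ring.
rewrite poly_integral_by_parts_X2subr1 legendre_deriv_ode [in RHS]natrM -mulrA.
rewrite poly_integral_legendre_ode mulrN -poly_integral_natl.
by congr (- I _); ring.
Qed.

Lemma poly_integral_legendre_tilde k n : I (Pt k.+2 * Pt n.+2)
  = (n.+2 * n.+3)%:R / (k.+1 * k.+4)%:R * I (P k.+2 * P n.+2).
Proof.
rewrite !legendre_tildeE -scalerAl -scalerAr !poly_integralZ.
rewrite poly_integral_deriv2_legendre (natrM _ (n.+1 * n.+4)) -mulrA mulKf ?pnatr_eq0 //.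
by rewrite mulrA [_^-1 * _]mulrC.
Qed.

End LegendreTilde.

Theorem mainTheorem4 (R : realFieldType) :
  (forall n : nat, (2 <= n)%N ->
     (exists G : {poly R},
        ((1 - 'X^2) * G^`())^`() = ('X^2 - 1) * (legendre R n)^`()
        /\ legendre_tilde R n = - G^`())
     /\ (forall G : {poly R},
        ((1 - 'X^2) * G^`())^`() = ('X^2 - 1) * (legendre R n)^`() ->
        legendre_tilde R n = - G^`()))
  /\
  (forall k n : nat, (2 <= k)%N -> (2 <= n)%N ->
     poly_integral (-1) 1 (legendre_tilde R k * legendre_tilde R n)
     = if k == n then
         (2 * n * (n + 1))%N%:R / ((n - 1) * (n + 2) * (2 * n + 1))%N%:R
       else 0).
Proof.
have flip_weight (p : {poly R}) : (1 - 'X^2) * p = - (('X^2 - 1) * p) by ring.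
split.
- case=> [|[|n]] // _; split.
  + exists (- poly_prim (legendre_tilde R n.+2)).
    rewrite derivN deriv_poly_prim opprK mulrN flip_weight opprK.
    by split=> //; apply: X2subr1_legendre_tilde_deriv.
  + move=> G eG; apply/eqP; rewrite -addr_eq0 addrC; apply/eqP.
    apply: deriv_X2subr1_mul_eq0.
    by rewrite mulrDr derivD X2subr1_legendre_tilde_deriv -eG flip_weight derivN subrr.
- case=> [|[|k]] //; case=> [|[|n]] // _ _.
  rewrite poly_integral_legendre_tilde !eqSS.
  case: eqVneq => [->|neq_kn]; last by rewrite legendre_orthogonal ?mulr0 // !eqSS.
  rewrite legendre_norm subn1 /= !natrD !natrM; field.
  have n_ge0 := ler0n R n.
  by apply/and3P; split; apply: lt0r_neq0; lra.
Qed.
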